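(* Let $M_0>0$, $M>M_0$, let $r=r(M_0,M)>0$ be as in the local existence theorem, and let $(A,\tau)$ be the solution on $[0,r]$ of system (1.1) with initial distribution $(\varphi,\tau_0)\in\mathrm{Lip}_\alpha\times C_+(\Omega)$ satisfying $\|\varphi\|_{\mathrm{Lip}_\alpha}+\|\tau_0\|_\infty\le M_0$ (so that $\|A(t,\cdot)\|_\infty\le M$ on $[0,r]$). Then $A_t\in\mathrm{Lip}_\alpha$ for every $t\in[0,r]$, and there exists a constant $\widehat M>M$, depending only on $M_0$, $M$, $\alpha$ and the data $F,f$ (through the bound $\tau_{\max}$ on the delay), such that $\|A_t\|_{\mathrm{Lip}_\alpha}\le\widehat M$ for all $t\in[0,r]$.
   Context: $\Omega\subset\mathbb R^n$ compact, $C(\Omega)$ with sup norm, $\alpha\ge0$ fixed. Standing assumption: $F:C(\Omega)\times C(\Omega)\times C(\Omega^2)\to C(\Omega)$ is Lipschitz on bounded sets; $f:C(\Omega)\to C(\Omega)$ is Lipschitz, $0<f(\phi)(x)\le M_f$ for a constant $M_f$, non-increasing for the pointwise order. $\mathrm{Lip}_\alpha$: $\phi\in C((-\infty,0],C(\Omega))$ with $\theta\mapsto e^{-\alpha|\theta|}\phi(\theta)$ bounded and Lipschitz, norm = sup norm + Lipschitz seminorm of that map. $A_t(\theta):=A(t+\theta)$, $\theta\le0$. Local existence theorem: for $M>M_0>0$ there is $r(M_0,M)>0$ such that for every such initial distribution, (1.1) has a unique solution on $[0,r]$, namely continuous $A:(-\infty,r]\to C(\Omega)$, $\tau:[0,r]\to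 C_+(\Omega)$ with $A=\varphi$ on $(-\infty,0]$, $A(t,x)=\varphi(0,x)+\int_0^tF(A(l,\cdot),\tau(l,\cdot),A(l-\tau(l)))(x)dl$ (with $A(l-\tau(l))(x,y)=A(l-\tau(l,x),y)$) and $\int_{t-\tau(t,x)}^tf(A(s,\cdot))(x)ds=\int_{-\tau_0(x)}^0f(\varphi(s,\cdot))(x)ds$, and $\|A(t,\cdot)\|_\infty\le M$ on $[0,r]$. *)

From Stdlib Require Import Reals.
From Stdlib Require Vectors.Fin.
Open Scope R_scope.

(** Points of R^n : functions Fin.t n -> R. The topology is that of the
    max-norm (equivalent to the Euclidean one). *)
Definition Pt (n : nat) : Type := Fin.t n -> R.

(** Sequential compactness of a subset of R^n (coordinatewise = norm
    convergence in R^n). *)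
Definition compact_set (n : nat) (Om : Pt n -> Prop) : Prop :=
  forall u : nat -> Pt n, (forall k, Om (u k)) ->
  exists (sub : nat -> nat) (p : Pt n),
    (forall k, (sub k < sub (S k))%nat) /\ Om p /\
    forall i, Un_cv (fun k => u (sub k) i) (p i).

Section Defs.
Context {n : nat} {Om : Pt n -> Prop}.

Definition OmT : Type := { x : Pt n | Om x }.

Definition pdist_lt (x y : OmT) (d : R) : Prop :=
  forall i, Rabs (proj1_sig x i - proj1_sig y i) < d.

Definition contO (u : OmT -> R) : Prop :=
  forall x : OmT, forall eps, 0 < eps -> exists del, 0 < del /\
    forall y : OmT, pdist_lt x y del -> Rabs (u x - u y) < eps.

Definition contO2 (w : OmT -> OmT -> R) : Prop :=
  forall x1 x2 : OmT, forall eps, 0 < eps -> exists del, 0 < del /\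
    forall y1 y2 : OmT, pdist_lt x1 y1 del -> pdist_lt x2 y2 del ->
      Rabs (w x1 x2 - w y1 y2) < eps.

Definition supn_le (u : OmT -> R) (K : R) : Prop := forall x, Rabs (u x) <= K.
Definition supn2_le (w : OmT -> OmT -> R) (K : R) : Prop :=
  forall x y, Rabs (w x y) <= K.

Definition F_hyp (F : (OmT -> R) -> (OmT -> R) -> (OmT -> OmT -> R) -> (OmT -> R)) : Prop :=
  (forall u v w, contO u -> contO v -> contO2 w -> contO (F u v w)) /\
  (forall K, exists L, forall u1 v1 w1 u2 v2 w2,
     contO u1 -> contO v1 -> contO2 w1 -> contO u2 -> contO v2 -> contO2 w2 ->
     supn_le u1 K -> supn_le v1 K -> supn2_le w1 K ->
     supn_le u2 K -> supn_le v2 K -> supn2_le w2 K ->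
     forall d1 d2 d3,
       supn_le (fun x => u1 x - u2 x) d1 ->
       supn_le (fun x => v1 x - v2 x) d2 ->
       supn2_le (fun x y => w1 x y - w2 x y) d3 ->
       supn_le (fun x => F u1 v1 w1 x - F u2 v2 w2 x) (L * (d1 + d2 + d3))).

Definition f_hyp (f : (OmT -> R) -> (OmT -> R)) (Mf : R) : Prop :=
  (forall u, contO u -> contO (f u)) /\
  (exists Lf, forall u v, contO u -> contO v -> forall d,
      supn_le (fun x => u x - v x) d ->
      supn_le (fun x => f u x - f v x) (Lf * d)) /\
  (forall u, contO u -> forall x, 0 < f u x <= Mf) /\
  (forall u v, contO u -> contO v -> (forall x, u x <= v x) ->
      forall x, f v x <= f u x).

Definition cont_path (A : R -> OmT -> R) (D : R -> Prop) : Prop :=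
  forall t, D t -> forall eps, 0 < eps -> exists del, 0 < del /\
    forall s, D s -> Rabs (s - t) < del -> forall x, Rabs (A s x - A t x) <= eps.

Definition in_Lip (alpha : R) (phi : R -> OmT -> R) : Prop :=
  (forall th, th <= 0 -> contO (phi th)) /\
  cont_path phi (fun th => th <= 0) /\
  (exists a, forall th, th <= 0 -> forall x, Rabs (exp (- alpha * Rabs th) * phi th x) <= a) /\
  (exists b, forall th1 th2, th1 <= 0 -> th2 <= 0 -> forall x,
      Rabs (exp (- alpha * Rabs th1) * phi th1 x - exp (- alpha * Rabs th2) * phi th2 x)
        <= b * Rabs (th1 - th2)).

Definition lip_norm_le (alpha : R) (phi : R -> OmT -> R) (K : R) : Prop :=
  exists a b, a + b <= K /\
  (forall th, th <= 0 -> forall x, Rabs (exp (- alpha * Rabs th) * phi th x) <= a) /\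
  (forall th1 th2, th1 <= 0 -> th2 <= 0 -> forall x,
      Rabs (exp (- alpha * Rabs th1) * phi th1 x - exp (- alpha * Rabs th2) * phi th2 x)
        <= b * Rabs (th1 - th2)).

Definition init_ok (alpha M0 : R) (phi : R -> OmT -> R) (tau0 : OmT -> R) : Prop :=
  in_Lip alpha phi /\ contO tau0 /\ (forall x, 0 <= tau0 x) /\
  exists K c, lip_norm_le alpha phi K /\ supn_le tau0 c /\ K + c <= M0.

Definition is_solution
    (F : (OmT -> R) -> (OmT -> R) -> (OmT -> OmT -> R) -> (OmT -> R))
    (f : (OmT -> R) -> (OmT -> R)) (r : R)
    (phi : R -> OmT -> R) (tau0 : OmT -> R)
    (A : R -> OmT -> R) (tau : R -> OmT -> R) : Prop :=
  (forall t, t <= r -> contO (A t)) /\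
  cont_path A (fun t => t <= r) /\
  (forall t, 0 <= t <= r -> contO (tau t) /\ forall x, 0 <= tau t x) /\
  cont_path tau (fun t => 0 <= t <= r) /\
  (forall t, t <= 0 -> forall x, A t x = phi t x) /\
  (forall t, 0 <= t <= r -> forall x,
     exists pr : Riemann_integrable
        (fun l => F (A l) (tau l) (fun y z => A (l - tau l y) z) x) 0 t,
       A t x = phi 0 x + RiemannInt pr) /\
  (forall t, 0 <= t <= r -> forall x,
     exists (pr1 : Riemann_integrable (fun s => f (A s) x) (t - tau t x) t)
            (pr2 : Riemann_integrable (fun s => f (phi s) x) (- tau0 x) 0),
       RiemannInt pr1 = RiemannInt pr2).

(** r is a time as provided by the local existence theorem for (M0, M):
    for every admissible initial distribution there is a unique solution
    on [0,r], and it satisfies ||A(t)||_oo <= M on [0,r]. *)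
Definition local_existence_time F f (alpha M0 M r : R) : Prop :=
  0 < r /\
  forall phi tau0, init_ok alpha M0 phi tau0 ->
    (exists A tau, is_solution F f r phi tau0 A tau /\
        forall t, 0 <= t <= r -> supn_le (A t) M) /\
    (forall A1 tau1 A2 tau2,
        is_solution F f r phi tau0 A1 tau1 -> is_solution F f r phi tau0 A2 tau2 ->
        (forall t, t <= r -> forall x, A1 t x = A2 t x) /\
        (forall t, 0 <= t <= r -> forall x, tau1 t x = tau2 t x)).

Definition hist (A : R -> OmT -> R) (t : R) : R -> OmT -> R := fun th => A (t + th).

End Defs.
Arguments OmT {n} Om.

From Stdlib Require Import Reals Lra Lia ClassicalEpsilon Classical FunctionalExtensionality.
Open Scope R_scope.

(* On [[0, t]] the solution is bounded by [M] and, being the integral of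
   [F (A l) (tau l) (A (l - tau l))], Lipschitz with a constant [C] depending only on [M0], [M],
   [alpha], [r] and [F]: the three arguments of [F] stay in a fixed ball because the delayed
   time [l - tau l] never drops below [- tau0 >= - M0] (the delay equation integrates the
   positive function [f]).  Hence [s |-> exp (alpha s) A s] is Lipschitz on [(-oo, r]] with
   constant [M0 + exp (alpha r) (alpha M + C)], gluing the initial datum to the solution,
   and the weight [exp (- alpha |theta|)] transports both bounds to the history [A_t]. *)

Lemma fin_eventually_uniform (n : nat) (P : Fin.t n -> nat -> Prop) :
  (forall i, exists N, forall k, (N <= k)%nat -> P i k) ->
  exists N, forall i k, (N <= k)%nat -> P i k.
Proof.
  revert P; induction n as [|n IH]; intros P HP.
  - exists 0%nat. intros i. apply (Fin.case0 (fun i => forall k, _ -> P i k) i).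
  - destruct (HP Fin.F1) as [N0 HN0].
    destruct (IH (fun i => P (Fin.FS i)) (fun i => HP (Fin.FS i))) as [N1 HN1].
    exists (Nat.max N0 N1). intros i.
    apply (Fin.caseS' i (fun i => forall k, _ -> P i k)).
    + intros k Hk; apply HN0; lia.
    + intros j k Hk; apply (HN1 j); lia.
Qed.

Lemma strictly_increasing_ge_id (sub : nat -> nat) :
  (forall k, (sub k < sub (S k))%nat) -> forall k, (k <= sub k)%nat.
Proof. intros H k; induction k as [|k IH]; [lia|]. specialize (H k); lia. Qed.

Lemma exp_le (x y : R) : x <= y -> exp x <= exp y.
Proof.
  intros H. destruct (Req_dec x y) as [E|E]; [rewrite E; lra|].
  left; apply exp_increasing; lra.
Qed.

Lemma exp_increment_le (alpha u v : R) : 0 <= alpha -> u <= v ->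
  0 <= exp (alpha * v) - exp (alpha * u) <= alpha * (v - u) * exp (alpha * v).
Proof.
  intros Ha Huv. split.
  - assert (exp (alpha * u) <= exp (alpha * v)) by (apply exp_le; nra). lra.
  - (* [1 - x <= exp (- x)] with [x = alpha (v - u)], multiplied by [exp (alpha v)] *)
    pose proof (exp_ineq1_le (- (alpha * (v - u)))) as H.
    assert (E : exp (alpha * v) * exp (- (alpha * (v - u))) = exp (alpha * u)).
    { rewrite <- exp_plus. f_equal. ring. }
    pose proof (exp_pos (alpha * v)). nra.
Qed.

Lemma weight_nonpos (alpha s : R) : s <= 0 -> exp (- alpha * Rabs s) = exp (alpha * s).
Proof. intros Hs. rewrite Rabs_left1 by exact Hs. f_equal. ring. Qed.

Lemma Rabs_le_of_weighted (c u y a : R) :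
  Rabs (exp (- c * u) * y) <= a -> Rabs y <= a * exp (c * u).
Proof.
  intros H. rewrite Rabs_mult, (Rabs_pos_eq (exp _)) in H by (left; apply exp_pos).
  assert (E : exp (c * u) * exp (- c * u) = 1).
  { rewrite <- exp_plus, <- exp_0. f_equal. ring. }
  pose proof (exp_pos (c * u)).
  replace (Rabs y) with (exp (c * u) * (exp (- c * u) * Rabs y))
    by (rewrite <- Rmult_assoc, E; ring).
  rewrite (Rmult_comm a). apply Rmult_le_compat_l; lra.
Qed.

Lemma RiemannInt_ge_const (g : R -> R) (a b m : R) (pr : Riemann_integrable g a b) :
  a <= b -> (forall s, a < s < b -> m <= g s) -> m * (b - a) <= RiemannInt pr.
Proof.
  intros Hab Hm.
  rewrite <- (RiemannInt_P15 (RiemannInt_P14 a b m)).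
  apply RiemannInt_P19; [exact Hab|]. intros s Hs. unfold fct_cte. auto.
Qed.

Lemma RiemannInt_pos (g : R -> R) (a b c m : R) (pr : Riemann_integrable g a b) :
  a < c -> c <= b -> 0 < m ->
  (forall s, a <= s <= b -> 0 <= g s) -> (forall s, a <= s <= c -> m <= g s) ->
  0 < RiemannInt pr.
Proof.
  intros Hac Hcb Hm Hg0 Hgm.
  assert (Hc : a <= c <= b) by lra.
  rewrite <- (RiemannInt_P26 (RiemannInt_P22 pr Hc) (RiemannInt_P23 pr Hc)).
  pose proof (RiemannInt_ge_const _ _ _ m (RiemannInt_P22 pr Hc) ltac:(lra)
                (fun s Hs => Hgm s ltac:(lra))).
  pose proof (RiemannInt_ge_const _ _ _ 0 (RiemannInt_P23 pr Hc) Hcb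
                (fun s Hs => Hg0 s ltac:(lra))).
  nra.
Qed.

Lemma lipschitz_glue (g : R -> R) (B t : R) :
  (forall s1 s2, s1 <= s2 <= 0 -> Rabs (g s2 - g s1) <= B * (s2 - s1)) ->
  (forall s1 s2, 0 <= s1 -> s1 <= s2 <= t -> Rabs (g s2 - g s1) <= B * (s2 - s1)) ->
  forall s1 s2, s1 <= s2 <= t -> Rabs (g s2 - g s1) <= B * (s2 - s1).
Proof.
  intros Hneg Hpos s1 s2 Hs.
  destruct (Rle_lt_dec s2 0) as [Hs2|Hs2]; [apply Hneg; lra|].
  destruct (Rle_lt_dec 0 s1) as [Hs1|Hs1]; [apply Hpos; lra|].
  pose proof (Hneg s1 0 ltac:(lra)). pose proof (Hpos 0 s2 (Rle_refl 0) ltac:(lra)).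
  replace (g s2 - g s1) with ((g s2 - g 0) + (g 0 - g s1)) by ring.
  eapply Rle_trans; [apply Rabs_triang|]. lra.
Qed.

Lemma exp_weighted_lipschitz (alpha M C t : R) (h : R -> R) : 0 <= alpha ->
  (forall s, 0 <= s <= t -> Rabs (h s) <= M) ->
  (forall s1 s2, 0 <= s1 -> s1 <= s2 <= t -> Rabs (h s2 - h s1) <= C * (s2 - s1)) ->
  forall s1 s2, 0 <= s1 -> s1 <= s2 <= t ->
  Rabs (exp (alpha * s2) * h s2 - exp (alpha * s1) * h s1)
    <= exp (alpha * t) * (alpha * M + C) * (s2 - s1).
Proof.
  intros Ha HM HC s1 s2 Hs1 Hs.
  pose proof (exp_increment_le alpha s1 s2 Ha ltac:(lra)) as [Hd1 Hd2].
  assert (He1 : exp (alpha * s1) <= exp (alpha * t)) by (apply exp_le; nra).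
  assert (He2 : exp (alpha * s2) <= exp (alpha * t)) by (apply exp_le; nra).
  pose proof (exp_pos (alpha * s1)).
  pose proof (HM s2 ltac:(lra)) as Hh2. pose proof (HC s1 s2 Hs1 Hs) as Hh12.
  pose proof (Rabs_pos (h s2)). pose proof (Rabs_pos (h s2 - h s1)).
  replace (exp (alpha * s2) * h s2 - exp (alpha * s1) * h s1) with
    ((exp (alpha * s2) - exp (alpha * s1)) * h s2 + exp (alpha * s1) * (h s2 - h s1)) by ring.
  eapply Rle_trans; [apply Rabs_triang|]. rewrite !Rabs_mult.
  rewrite (Rabs_pos_eq (exp (alpha * s2) - _)), (Rabs_pos_eq (exp (alpha * s1))) by lra.
  assert (T1 : (exp (alpha * s2) - exp (alpha * s1)) * Rabs (h s2)
               <= alpha * (s2 - s1) * exp (alpha * t) * M).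
  { apply Rmult_le_compat; try lra.
    eapply Rle_trans; [exact Hd2|]. apply Rmult_le_compat_l; nra. }
  assert (T2 : exp (alpha * s1) * Rabs (h s2 - h s1) <= exp (alpha * t) * (C * (s2 - s1)))
    by (apply Rmult_le_compat; lra).
  lra.
Qed.
Lemma hist_weighted_sup (alpha M t : R) (h : R -> R) : 0 <= alpha -> 0 <= t ->
  (forall s, s <= 0 -> Rabs (exp (- alpha * Rabs s) * h s) <= M) ->
  (forall s, 0 <= s <= t -> Rabs (h s) <= M) ->
  forall th, th <= 0 -> Rabs (exp (- alpha * Rabs th) * h (t + th)) <= M.
Proof.
  intros Ha Ht Hneg Hpos th Hth.
  rewrite Rabs_mult, (Rabs_pos_eq (exp _)) by (left; apply exp_pos).
  pose proof (Rabs_pos (h (t + th))).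
  destruct (Rle_lt_dec 0 (t + th)) as [Hs|Hs].
  - assert (exp (- alpha * Rabs th) <= 1)
      by (rewrite <- exp_0; apply exp_le; pose proof (Rabs_pos th); nra).
    pose proof (Hpos (t + th) ltac:(lra)). nra.
  - pose proof (Hneg (t + th) ltac:(lra)) as Hw.
    rewrite Rabs_mult, (Rabs_pos_eq (exp _)) in Hw by (left; apply exp_pos).
    assert (exp (- alpha * Rabs th) <= exp (- alpha * Rabs (t + th))).
    { apply exp_le. rewrite (Rabs_left1 th), (Rabs_left1 (t + th)) by lra. nra. }
    nra.
Qed.

(* [exp (- alpha |th|) h (t + th) = exp (- alpha t) g (t + th)] with [g s = exp (alpha s) h s] *)
Lemma hist_weighted_lipschitz (alpha B t : R) (h : R -> R) : 0 <= alpha -> 0 <= t ->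
  (forall s1 s2, s1 <= s2 <= t ->
     Rabs (exp (alpha * s2) * h s2 - exp (alpha * s1) * h s1) <= B * (s2 - s1)) ->
  forall th1 th2, th1 <= 0 -> th2 <= 0 ->
  Rabs (exp (- alpha * Rabs th1) * h (t + th1) - exp (- alpha * Rabs th2) * h (t + th2))
    <= B * Rabs (th1 - th2).
Proof.
  intros Ha Ht Hg th1 th2 H1 H2.
  set (g := fun s => exp (alpha * s) * h s) in Hg.
  assert (Hth : forall th, th <= 0 ->
            exp (- alpha * Rabs th) * h (t + th) = exp (- alpha * t) * g (t + th)).
  { intros th Hth. unfold g. rewrite Rabs_left1 by lra.
    rewrite <- Rmult_assoc, <- exp_plus. f_equal. f_equal. ring. }
  rewrite (Hth th1 H1), (Hth th2 H2), <- Rmult_minus_distr_l, Rabs_mult,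
    (Rabs_pos_eq (exp _)) by (left; apply exp_pos).
  assert (Hgg : Rabs (g (t + th1) - g (t + th2)) <= B * Rabs (th1 - th2)).
  { destruct (Rle_lt_dec th1 th2).
    - rewrite Rabs_minus_sym, (Rabs_left1 (th1 - th2)) by lra.
      replace (- (th1 - th2)) with (t + th2 - (t + th1)) by ring. apply Hg; lra.
    - rewrite (Rabs_pos_eq (th1 - th2)) by lra.
      replace (th1 - th2) with (t + th1 - (t + th2)) by ring. apply Hg; lra. }
  assert (exp (- alpha * t) <= 1) by (rewrite <- exp_0; apply exp_le; nra).
  pose proof (Rabs_pos (g (t + th1) - g (t + th2))). pose proof (exp_pos (- alpha * t)).
  nra.
Qed.

Section Omega.
Context {n : nat} {Om : Pt n -> Prop}.

Lemma contO_const (k : R) : @contO n Om (fun _ => k).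
Proof. intros x eps He. exists 1. split; [lra|]. intros y _. rewrite Rminus_diag, Rabs_R0; lra. Qed.

Lemma contO2_const (k : R) : @contO2 n Om (fun _ _ => k).
Proof.
  intros x1 x2 eps He. exists 1. split; [lra|].
  intros y1 y2 _ _. rewrite Rminus_diag, Rabs_R0; lra.
Qed.

Lemma contO_bounded : compact_set n Om ->
  forall g : OmT Om -> R, contO g -> exists G, supn_le g G.
Proof.
  intros HOm g Hg. apply NNPP; intros Hunb.
  assert (Hk : forall k : nat, exists x, INR k < Rabs (g x)).
  { intros k. apply NNPP; intros Hk. apply Hunb. exists (INR k). intros x.
    apply Rnot_lt_le; intros Hx; apply Hk; eauto. }
  pose (u := fun k => proj1_sig (constructive_indefinite_description _ (Hk k))).
  assert (Hu : forall k, INR k < Rabs (g (u k))).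
  { intros k; unfold u; destruct (constructive_indefinite_description _ (Hk k)); auto. }
  destruct (HOm (fun k => proj1_sig (u k)) (fun k => proj2_sig (u k)))
    as [sub [p [Hsub [Hp Hcv]]]].
  set (xp := exist Om p Hp : OmT Om).
  destruct (Hg xp 1 Rlt_0_1) as [del [Hdel Hd]].
  destruct (fin_eventually_uniform n
              (fun i k => Rabs (proj1_sig (u (sub k)) i - p i) < del)) as [N HN].
  { intros i. destruct (Hcv i del Hdel) as [N HN]. exists N. exact HN. }
  destruct (INR_unbounded (Rabs (g xp) + 1)) as [N' HN'].
  set (k := Nat.max N N').
  assert (Hclose : Rabs (g xp - g (u (sub k))) < 1).
  { apply Hd. intros i. simpl. rewrite Rabs_minus_sym. apply HN. unfold k; lia. }
  pose proof (Hu (sub k)).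
  pose proof (le_INR _ _ (strictly_increasing_ge_id sub Hsub k)).
  pose proof (le_INR N' k ltac:(unfold k; lia)).
  pose proof (Rabs_triang_inv (g (u (sub k))) (g xp)).
  rewrite Rabs_minus_sym in Hclose. lra.
Qed.

(* Compare with [F 0 0 0], which is bounded because [Om] is compact. *)
Lemma F_hyp_bounded
  (F : (OmT Om -> R) -> (OmT Om -> R) -> (OmT Om -> OmT Om -> R) -> (OmT Om -> R)) :
  compact_set n Om -> F_hyp F ->
  forall K, exists C, forall u v w, contO u -> contO v -> contO2 w ->
    supn_le u K -> supn_le v K -> supn2_le w K -> supn_le (F u v w) C.
Proof.
  intros HOm [HFc HFL] K. destruct (HFL K) as [L HL].
  destruct (contO_bounded HOm (F (fun _ => 0) (fun _ => 0) (fun _ _ => 0))) as [G0 HG0].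
  { apply HFc; [apply contO_const|apply contO_const|apply contO2_const]. }
  exists (G0 + Rabs L * (3 * K)). intros u v w Hu Hv Hw HuK HvK HwK x.
  assert (HK : 0 <= K) by (pose proof (HuK x); pose proof (Rabs_pos (u x)); lra).
  assert (H0K : supn_le (fun _ : OmT Om => 0) K) by (intros z; rewrite Rabs_R0; lra).
  assert (H02K : supn2_le (fun _ _ : OmT Om => 0) K) by (intros y z; rewrite Rabs_R0; lra).
  assert (HF : Rabs (F u v w x - F (fun _ => 0) (fun _ => 0) (fun _ _ => 0) x)
               <= L * (K + K + K)).
  { apply (HL u v w _ _ _ Hu Hv Hw (contO_const 0) (contO_const 0) (contO2_const 0)
             HuK HvK HwK H0K H0K H02K).
    - intros z. rewrite Rminus_0_r. apply HuK.
    - intros z. rewrite Rminus_0_r. apply HvK.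
    - intros y z. rewrite Rminus_0_r. apply HwK. }
  assert (L * (K + K + K) <= Rabs L * (3 * K))
    by (replace (K + K + K) with (3 * K) by ring; apply Rmult_le_compat_r; [lra|apply Rle_abs]).
  pose proof (HG0 x).
  pose proof (Rabs_triang_inv (F u v w x) (F (fun _ => 0) (fun _ => 0) (fun _ _ => 0) x)).
  lra.
Qed.

Lemma f_hyp_cont_path (f : (OmT Om -> R) -> (OmT Om -> R)) (Mf : R)
  (P : R -> OmT Om -> R) (D : R -> Prop) : f_hyp f Mf ->
  (forall s, D s -> contO (P s)) -> cont_path P D -> cont_path (fun s => f (P s)) D.
Proof.
  intros [_ [[Lf HLf] _]] HPc HP t Ht eps Heps.
  set (eps' := eps / (Rabs Lf + 1)).
  assert (HLf1 : 0 < Rabs Lf + 1) by (pose proof (Rabs_pos Lf); lra).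
  assert (Heps' : 0 < eps') by (apply Rdiv_lt_0_compat; lra).
  assert (E : (Rabs Lf + 1) * eps' = eps) by (unfold eps'; field; lra).
  destruct (HP t Ht eps' Heps') as [del [Hdel Hd]].
  exists del. split; [exact Hdel|]. intros s Hs Hst x.
  pose proof (HLf (P s) (P t) (HPc s Hs) (HPc t Ht) eps' (Hd s Hs Hst) x) as H.
  simpl in H. pose proof (Rle_abs Lf).
  assert (Lf * eps' <= Rabs Lf * eps') by (apply Rmult_le_compat_r; lra).
  lra.
Qed.

Lemma delayed_contO2 (A : R -> OmT Om -> R) (d : OmT Om -> R) (l r : R) :
  (forall t, t <= r -> contO (A t)) -> cont_path A (fun t => t <= r) ->
  contO d -> (forall y, 0 <= d y) -> l <= r ->
  contO2 (fun y z => A (l - d y) z).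
Proof.
  intros HAc HAp Hd Hdnn Hl y1 z1 eps Heps.
  assert (Hs1 : l - d y1 <= r) by (pose proof (Hdnn y1); lra).
  destruct (HAp _ Hs1 (eps / 2) ltac:(lra)) as [d1 [Hd1 H1]].
  destruct (Hd y1 d1 Hd1) as [d2 [Hd2 H2]].
  destruct (HAc _ Hs1 z1 (eps / 2) ltac:(lra)) as [d3 [Hd3 H3]].
  exists (Rmin d2 d3). split; [apply Rmin_glb_lt; auto|].
  intros y2 z2 Hy Hz.
  assert (Hy' : pdist_lt y1 y2 d2).
  { intros i. eapply Rlt_le_trans; [apply Hy|apply Rmin_l]. }
  assert (Hz' : pdist_lt z1 z2 d3).
  { intros i. eapply Rlt_le_trans; [apply Hz|apply Rmin_r]. }
  assert (Hs2 : l - d y2 <= r) by (pose proof (Hdnn y2); lra).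
  assert (Hd12 : Rabs ((l - d y2) - (l - d y1)) < d1).
  { replace ((l - d y2) - (l - d y1)) with (d y1 - d y2) by ring. auto. }
  specialize (H1 _ Hs2 Hd12 z2). specialize (H3 z2 Hz').
  pose proof (Rabs_triang (A (l - d y1) z1 - A (l - d y1) z2)
                          (A (l - d y1) z2 - A (l - d y2) z2)) as Htri.
  replace (A (l - d y1) z1 - A (l - d y1) z2 + (A (l - d y1) z2 - A (l - d y2) z2))
    with (A (l - d y1) z1 - A (l - d y2) z2) in Htri by ring.
  rewrite (Rabs_minus_sym (A (l - d y1) z2)) in Htri. lra.
Qed.

Lemma init_ok_bounds {alpha M0 : R} {phi : R -> OmT Om -> R} {tau0 : OmT Om -> R} :
  init_ok alpha M0 phi tau0 ->
  (forall s, s <= 0 -> forall x, Rabs (exp (- alpha * Rabs s) * phi s x) <= M0) /\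
  (forall s1 s2, s1 <= 0 -> s2 <= 0 -> forall x,
     Rabs (exp (- alpha * Rabs s1) * phi s1 x - exp (- alpha * Rabs s2) * phi s2 x)
       <= M0 * Rabs (s1 - s2)) /\
  (forall x, 0 <= tau0 x <= M0).
Proof.
  intros [_ [_ [Htau0 [K [c [[a [b [Hab [Ha Hb]]]] [Hc HKc]]]]]]].
  (* [a], [b], [c] are nonnegative only because [Om] has a point [x] to evaluate at *)
  assert (Hnn : forall x : OmT Om, 0 <= a /\ 0 <= b /\ 0 <= c).
  { intros x. pose proof (Rabs_pos (exp (- alpha * Rabs 0) * phi 0 x)).
    pose proof (Ha 0 (Rle_refl 0) x).
    pose proof (Hb 0 (-1) (Rle_refl 0) ltac:(lra) x) as Hb1.
    replace (Rabs (0 - -1)) with 1 in Hb1 by (rewrite Rabs_pos_eq; lra).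
    pose proof (Rabs_pos (exp (- alpha * Rabs 0) * phi 0 x
                          - exp (- alpha * Rabs (-1)) * phi (-1) x)).
    pose proof (Hc x). pose proof (Rabs_pos (tau0 x)). lra. }
  split; [|split].
  - intros s Hs x. destruct (Hnn x). pose proof (Ha s Hs x). lra.
  - intros s1 s2 H1 H2 x. destruct (Hnn x). eapply Rle_trans; [apply Hb; auto|].
    apply Rmult_le_compat_r; [apply Rabs_pos|lra].
  - intros x. destruct (Hnn x). pose proof (Htau0 x). pose proof (Hc x).
    pose proof (Rle_abs (tau0 x)). lra.
Qed.

Lemma hist_in_Lip (alpha a b K t r : R) (A : R -> OmT Om -> R) :
  (forall s, s <= r -> contO (A s)) -> cont_path A (fun s => s <= r) -> t <= r ->
  (forall th, th <= 0 -> forall x, Rabs (exp (- alpha * Rabs th) * hist A t th x) <= a) ->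
  (forall th1 th2, th1 <= 0 -> th2 <= 0 -> forall x,
     Rabs (exp (- alpha * Rabs th1) * hist A t th1 x - exp (- alpha * Rabs th2) * hist A t th2 x)
       <= b * Rabs (th1 - th2)) ->
  a + b <= K ->
  in_Lip alpha (hist A t) /\ lip_norm_le alpha (hist A t) K.
Proof.
  intros HAc HAp Ht Hsup Hlip HK. split.
  - split; [|split; [|split]].
    + intros th Hth. apply HAc. lra.
    + intros th Hth eps He. destruct (HAp (t + th) ltac:(lra) eps He) as [del [Hdel Hd]].
      exists del; split; [exact Hdel|]. intros s Hs Hsd x. apply Hd; [lra|].
      replace (t + s - (t + th)) with (s - th) by ring. exact Hsd.
    + exists a. exact Hsup.
    + exists b. exact Hlip.
  - exists a, b. auto.
Qed.

Lemma solution_bounded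
  {F : (OmT Om -> R) -> (OmT Om -> R) -> (OmT Om -> OmT Om -> R) -> (OmT Om -> R)}
  {f : (OmT Om -> R) -> (OmT Om -> R)} {alpha M0 M r : R}
  {phi : R -> OmT Om -> R} {tau0 : OmT Om -> R} {A tau : R -> OmT Om -> R} :
  local_existence_time F f alpha M0 M r -> init_ok alpha M0 phi tau0 ->
  is_solution F f r phi tau0 A tau -> forall s, 0 <= s <= r -> supn_le (A s) M.
Proof.
  intros [_ Hr] Hinit Hsol s Hs x.
  destruct (Hr phi tau0 Hinit) as [[A' [tau' [Hsol' HA'M]]] Huniq].
  destruct (Huniq A tau A' tau' Hsol Hsol') as [E _].
  rewrite E by lra. apply HA'M, Hs.
Qed.

End Omega.

Section Solution.
Context {n : nat} {Om : Pt n -> Prop}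
  {F : (OmT Om -> R) -> (OmT Om -> R) -> (OmT Om -> OmT Om -> R) -> (OmT Om -> R)}
  {f : (OmT Om -> R) -> (OmT Om -> R)} {r : R}
  {phi : R -> OmT Om -> R} {tau0 : OmT Om -> R} {A tau : R -> OmT Om -> R}.
Hypothesis Hsol : is_solution F f r phi tau0 A tau.

(* If [l - tau] fell below [- tau0], the left integral of the delay equation would exceed
   the right one by the integral of [f] over [[l - tau, - tau0]], which is positive. *)
Lemma delay_le_elapsed {Mf : R} : f_hyp f Mf ->
  (forall s, s <= 0 -> contO (phi s)) -> cont_path phi (fun s => s <= 0) ->
  (forall y, 0 <= tau0 y) ->
  forall l y, 0 <= l <= r -> tau l y <= l + tau0 y.
Proof.
  intros Hf Hphic Hphip Htau0 l y Hl. apply Rnot_lt_le; intros Hlt.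
  destruct Hsol as [HAc [_ [Htauc [_ [HAphi [_ HAtau]]]]]].
  pose proof (proj2 (Htauc l Hl) y) as Htau_nn. pose proof (Htau0 y).
  destruct (HAtau l Hl y) as [pr1 [pr2 Heq]].
  set (a := l - tau l y) in *.
  assert (Ha_lt : a < - tau0 y) by (unfold a; lra).
  assert (HAeq : forall s, s <= 0 -> A s = phi s).
  { intros s Hs; apply functional_extensionality; intros z; apply HAphi, Hs. }
  pose proof (f_hyp_cont_path f Mf phi _ Hf Hphic Hphip) as Hfphi.
  destruct Hf as [_ [_ [Hfpos _]]].
  assert (Hfnn : forall s, s <= r -> 0 <= f (A s) y).
  { intros s Hs. destruct (Hfpos _ (HAc s Hs) y); lra. }
  assert (Hsplit1 : a <= - tau0 y <= l) by lra.
  assert (Hsplit2 : - tau0 y <= 0 <= l) by lra.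
  set (pb := RiemannInt_P23 pr1 Hsplit1).
  rewrite <- (RiemannInt_P26 (RiemannInt_P22 pr1 Hsplit1) pb) in Heq.
  rewrite <- (RiemannInt_P26 (RiemannInt_P22 pb Hsplit2) (RiemannInt_P23 pb Hsplit2)) in Heq.
  assert (Hhist : RiemannInt (RiemannInt_P22 pb Hsplit2) = RiemannInt pr2).
  { apply RiemannInt_P18; [lra|]. intros s Hs. rewrite HAeq by lra. reflexivity. }
  assert (Hpresent : 0 <= RiemannInt (RiemannInt_P23 pb Hsplit2)).
  { pose proof (RiemannInt_ge_const _ _ _ 0 (RiemannInt_P23 pb Hsplit2) ltac:(lra)
                  (fun s Hs => Hfnn s ltac:(lra))). lra. }
  assert (Hgap : 0 < RiemannInt (RiemannInt_P22 pr1 Hsplit1)).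
  { assert (Ha0 : a <= 0) by lra.
    pose proof (proj1 (Hfpos (phi a) (Hphic a Ha0) y)) as Hv0.
    set (v0 := f (phi a) y) in *.
    destruct (Hfphi a Ha0 (v0 / 2) ltac:(lra)) as [del [Hdel Hd]].
    apply (RiemannInt_pos _ _ _ (Rmin (a + del / 2) (- tau0 y)) (v0 / 2)).
    - apply Rmin_glb_lt; lra.
    - apply Rmin_r.
    - lra.
    - intros s Hs. apply Hfnn. lra.
    - intros s Hs. pose proof (Rmin_l (a + del / 2) (- tau0 y)).
      pose proof (Rmin_r (a + del / 2) (- tau0 y)).
      rewrite HAeq by lra.
      assert (Hsa : Rabs (s - a) < del) by (rewrite Rabs_pos_eq; lra).
      pose proof (Hd s ltac:(lra) Hsa y) as Hclose. simpl in Hclose.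
      pose proof (Rle_abs (v0 - f (phi s) y)). rewrite Rabs_minus_sym in Hclose.
      fold v0 in Hclose. lra. }
  lra.
Qed.

Lemma solution_lipschitz {C : R} :
  (forall l x, 0 <= l <= r -> Rabs (F (A l) (tau l) (fun y z => A (l - tau l y) z) x) <= C) ->
  forall x s1 s2, 0 <= s1 -> s1 <= s2 <= r -> Rabs (A s2 x - A s1 x) <= C * (s2 - s1).
Proof.
  intros HFC x s1 s2 Hs1 Hs.
  destruct Hsol as [_ [_ [_ [_ [_ [HAint _]]]]]].
  destruct (HAint s2 ltac:(lra) x) as [pr2 E2].
  destruct (HAint s1 ltac:(lra) x) as [pr1 E1].
  assert (Hs' : 0 <= s1 <= s2) by lra.
  rewrite <- (RiemannInt_P26 (RiemannInt_P22 pr2 Hs') (RiemannInt_P23 pr2 Hs')) in E2.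
  rewrite (RiemannInt_P5 (RiemannInt_P22 pr2 Hs') pr1) in E2.
  assert (Hb : - C * (s2 - s1) <= RiemannInt (RiemannInt_P23 pr2 Hs') <= C * (s2 - s1)).
  { apply RiemannInt_const_bound; [lra|]. intros l Hl.
    pose proof (HFC l x ltac:(lra)) as Hl'.
    pose proof (Rle_abs (F (A l) (tau l) (fun y z => A (l - tau l y) z) x)).
    pose proof (Rle_abs (- F (A l) (tau l) (fun y z => A (l - tau l y) z) x)).
    rewrite Rabs_Ropp in *. lra. }
  apply Rabs_le. lra.
Qed.

Lemma solution_rhs_bounded (alpha M0 M K C : R) : 0 <= alpha -> 0 <= M0 ->
  M + M0 * exp (alpha * M0) <= K -> r + M0 <= K ->
  (forall s, s <= 0 -> forall x, Rabs (exp (- alpha * Rabs s) * phi s x) <= M0) ->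
  (forall y, 0 <= tau0 y <= M0) ->
  (forall s, 0 <= s <= r -> supn_le (A s) M) ->
  (forall l y, 0 <= l <= r -> tau l y <= l + tau0 y) ->
  (forall u v w, contO u -> contO v -> contO2 w ->
     supn_le u K -> supn_le v K -> supn2_le w K -> supn_le (F u v w) C) ->
  forall l x, 0 <= l <= r -> Rabs (F (A l) (tau l) (fun y z => A (l - tau l y) z) x) <= C.
Proof.
  intros Ha HM0 HKA HKtau Hphi Htau0 HAM Hdelay HFK l x Hl.
  destruct Hsol as [HAc [HAp [Htauc [_ [HAphi _]]]]].
  destruct (Htauc l Hl) as [Htlc Htlnn].
  assert (HE : 0 <= M0 * exp (alpha * M0)) by (pose proof (exp_pos (alpha * M0)); nra).
  apply HFK.
  - apply HAc; lra.
  - exact Htlc.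
  - apply (delayed_contO2 A (tau l) l r HAc HAp Htlc Htlnn); lra.
  - intros z. pose proof (HAM l Hl z). lra.
  - intros z. pose proof (Htlnn z). pose proof (Hdelay l z Hl). pose proof (Htau0 z).
    rewrite Rabs_pos_eq; lra.
  - intros y z. pose proof (Htlnn y). pose proof (Hdelay l y Hl). pose proof (Htau0 y).
    pose proof (HAM l Hl z). pose proof (Rabs_pos (A l z)).
    destruct (Rle_lt_dec 0 (l - tau l y)) as [Hs|Hs].
    + pose proof (HAM (l - tau l y) ltac:(lra) z). lra.
    + rewrite HAphi by lra.
      eapply Rle_trans; [apply Rabs_le_of_weighted, Hphi; lra|].
      assert (exp (alpha * Rabs (l - tau l y)) <= exp (alpha * M0))
        by (apply exp_le; rewrite Rabs_left by lra; nra).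
      nra.
Qed.

Lemma solution_weighted_lipschitz (alpha M0 M C : R) :
  0 <= alpha -> 0 <= M0 -> 0 <= M -> 0 <= C ->
  (forall s1 s2, s1 <= 0 -> s2 <= 0 -> forall x,
     Rabs (exp (- alpha * Rabs s1) * phi s1 x - exp (- alpha * Rabs s2) * phi s2 x)
       <= M0 * Rabs (s1 - s2)) ->
  (forall s, 0 <= s <= r -> supn_le (A s) M) ->
  (forall l x, 0 <= l <= r -> Rabs (F (A l) (tau l) (fun y z => A (l - tau l y) z) x) <= C) ->
  forall x s1 s2, s1 <= s2 <= r ->
  Rabs (exp (alpha * s2) * A s2 x - exp (alpha * s1) * A s1 x)
    <= (M0 + exp (alpha * r) * (alpha * M + C)) * (s2 - s1).
Proof.
  intros Ha HM0 HM HC Hphi HAM HFC x. pose proof Hsol as [_ [_ [_ [_ [HAphi _]]]]].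
  apply lipschitz_glue.
  - intros s1 s2 Hs.
    rewrite !HAphi, <- (weight_nonpos alpha s1), <- (weight_nonpos alpha s2) by lra.
    rewrite Rabs_minus_sym. eapply Rle_trans; [apply Hphi; lra|].
    rewrite Rabs_left1 by lra.
    assert (0 <= exp (alpha * r) * (alpha * M + C)).
    { pose proof (exp_pos (alpha * r)). assert (0 <= alpha * M) by nra. nra. }
    nra.
  - intros s1 s2 Hs1 Hs.
    eapply Rle_trans;
      [apply (exp_weighted_lipschitz alpha M C r (fun s => A s x) Ha
                (fun s Hs => HAM s Hs x) (solution_lipschitz HFC x)); lra|].
    nra.
Qed.

End Solution.

Theorem corollary4p5
  (n : nat) (Om : Pt n -> Prop) (HOm : compact_set n Om)
  (alpha : R) (Halpha : 0 <= alpha)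
  (F : (OmT Om -> R) -> (OmT Om -> R) -> (OmT Om -> OmT Om -> R) -> (OmT Om -> R))
  (HF : F_hyp F)
  (f : (OmT Om -> R) -> (OmT Om -> R)) (Mf : R) (Hf : f_hyp f Mf)
  (M0 M : R) (HM0 : 0 < M0) (HM : M0 < M)
  (r : R) (Hr : local_existence_time F f alpha M0 M r) :
  exists Mhat, M < Mhat /\
    forall (phi : R -> OmT Om -> R) (tau0 : OmT Om -> R),
      init_ok alpha M0 phi tau0 ->
      forall (A tau : R -> OmT Om -> R),
        is_solution F f r phi tau0 A tau ->
        forall t, 0 <= t <= r ->
          in_Lip alpha (hist A t) /\ lip_norm_le alpha (hist A t) Mhat.
Proof.
  set (K := M + M0 * exp (alpha * M0) + r + M0).
  destruct (F_hyp_bounded F HOm HF K) as [C HC].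
  set (B := M0 + exp (alpha * r) * (alpha * M + Rabs C)).
  assert (HB : M0 <= B).
  { pose proof (exp_pos (alpha * r)). pose proof (Rabs_pos C).
    assert (0 <= alpha * M) by nra. unfold B; nra. }
  exists (M + B + 1). split; [lra|].
  intros phi tau0 Hinit A tau Hsol t Ht.
  destruct (init_ok_bounds Hinit) as [Hphi_sup [Hphi_lip Htau0]].
  pose proof (solution_bounded Hr Hinit Hsol) as HAM.
  pose proof Hinit as [[Hphic [Hphip _]] _].
  pose proof Hsol as [HAc [HAp [_ [_ [HAphi _]]]]].
  assert (HFC : forall l x, 0 <= l <= r ->
            Rabs (F (A l) (tau l) (fun y z => A (l - tau l y) z) x) <= Rabs C).
  { intros l x Hl. eapply Rle_trans; [|apply Rle_abs].
    pose proof (exp_pos (alpha * M0)).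
    exact (solution_rhs_bounded Hsol alpha M0 M K C Halpha ltac:(lra)
             ltac:(unfold K; nra) ltac:(unfold K; nra) Hphi_sup Htau0 HAM
             (delay_le_elapsed Hsol Hf Hphic Hphip (fun y => proj1 (Htau0 y))) HC l x Hl). }
  pose proof (solution_weighted_lipschitz Hsol alpha M0 M (Rabs C) Halpha ltac:(lra) ltac:(lra)
                (Rabs_pos C) Hphi_lip HAM HFC) as Hg.
  apply (hist_in_Lip alpha M B (M + B + 1) t r A HAc HAp); [lra| | |lra]; unfold hist.
  - intros th Hth x.
    apply (hist_weighted_sup alpha M t (fun s => A s x)); try lra.
    + intros s Hs. rewrite HAphi by lra. pose proof (Hphi_sup s Hs x). lra.
    + intros s Hs. apply HAM. lra.
  - intros th1 th2 H1 H2 x.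
    apply (hist_weighted_lipschitz alpha B t (fun s => A s x)); try lra.
    intros s1 s2 Hs. apply Hg. lra.
Qed.
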